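(* Let $A\in\mathbb{R}^{n\times d}$, $b\in\mathbb{R}^n$, and suppose $Ax=b$ admits a solution $x^*$. Let $w$ be a random variable in $\mathbb{R}^d$, $\mathcal{L}(w) = \mathrm{span}\lbrace z\in\mathbb{R}^n : \mathbb{P}[z'Aw=0]=1\rbrace$, $\mathcal{C}(w) = \mathcal{L}(w)^\perp$, and let $\mathcal{E}(w)$ be the subspace orthogonal to $\mathcal{C}(w)$ with $\mathcal{E}(w)\oplus\mathcal{C}(w)$ equal to the column space of $A$. Let $\lbrace w_\ell:\ell\geq0\rbrace$ be random variables in $\mathbb{R}^d$ with $\mathbb{P}[Aw_\ell\in\mathcal{C}(w)]=1$ for all $\ell$, let $x_0\in\mathbb{R}^d$ be arbitrary, $x_{k+1} = x_k + w_kw_k'A'(b-Ax_k)/\|Aw_k\|_2^2$, and $r_k = Ax_k-b$. Define $\tau_0=0$, $\tau_1 = \min\lbrace k\geq0:\mathrm{span}\lbrace Aw_0,\ldots,Aw_k\rbrace = \mathcal{C}(w)\rbrace$, and for $\ell\geq2$, $\tau_\ell = \min\lbrace k>\tau_{\ell-1}:\mathrm{span}\lbrace Aw_{\tau_{\ell-1}+1},\ldots,Aw_k\rbrace=\mathcal{C}(w)\rbrace$ if $\tau_{\ell-1}<\infty$, else $\tau_\ell=\infty$; for finite stopping times let $\mathcal{F}_\ell$ be the set of matrices whose columns form a maximal linearly independent subset of $\lbrace Aw_{\tau_{\ell-1}+1}/\|Aw_{\tau_{\ell-1}+1}\|_2,\ldots,Aw_{\tau_\ell}/\|Aw_{\tau_\ell}\|_2\rbrace$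 and $\gamma_\ell = 1-\min_{F\in\mathcal{F}_\ell}\det(F'F)$. Then, on the events $\bigcap_{\ell=0}^\infty\lbrace\tau_\ell<\infty\rbrace$ and $\lbrace\lim_{\ell\to\infty}\prod_{j=1}^\ell\gamma_j=0\rbrace$, $\lim_{k\to\infty}Ax_k = b$ if and only if $P_{\mathcal{E}(w)}r_0 = 0$.
   Context: $P_W$ is orthogonal projection onto $W$; $A'$ is the transpose. The iteration presupposes $Aw_k\neq0$. *)

From HB Require Import structures.
From mathcomp Require Import all_boot all_order all_algebra.
From mathcomp Require Import all_classical all_reals all_analysis.
Set Implicit Arguments. Unset Strict Implicit. Unset Printing Implicit Defensive.
Import Order.TTheory GRing.Theory Num.Theory.
Local Open Scope ring_scope.
Local Open Scope classical_set_scope.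

Section Defs.
Variable R : realType.

Definition dotv n (u v : 'cV[R]_n) : R := \sum_i u i 0 * v i 0.
Definition nrm2 n (v : 'cV[R]_n) : R := Num.sqrt (dotv v v).

Definition span_set n (X : set 'cV[R]_n) : set 'cV[R]_n :=
  [set v | exists m (c : 'I_m -> R) (z : 'I_m -> 'cV[R]_n),
      (forall i, X (z i)) /\ v = \sum_i c i *: z i].

Definition orth_compl n (X : set 'cV[R]_n) : set 'cV[R]_n :=
  [set v | forall z, X z -> dotv z v = 0].

Definition colspace n d (A : 'M[R]_(n, d)) : set 'cV[R]_n :=
  [set v | exists x, v = A *m x].

Definition is_subspace n (X : set 'cV[R]_n) : Prop :=
  X 0 /\ (forall u v, X u -> X v -> X (u + v)) /\ (forall a u, X u -> X (a *: u)).

Definition orth_proj n (W : set 'cV[R]_n) (v : 'cV[R]_n) : 'cV[R]_n :=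
  xget 0 [set p | W p /\ forall u, W u -> dotv u (v - p) = 0].

Definition Lspace dT (T : measurableType dT) (P : probability T R) n d
    (A : 'M[R]_(n, d)) (w : T -> 'cV[R]_d) : set 'cV[R]_n :=
  span_set [set z | P [set t | dotv z (A *m w t) = 0] = 1%E].
Definition Cspace dT (T : measurableType dT) (P : probability T R) n d
    (A : 'M[R]_(n, d)) (w : T -> 'cV[R]_d) : set 'cV[R]_n :=
  orth_compl (Lspace P A w).

(* the iteration x_{k+1} = x_k + w_k w_k' A' (b - A x_k) / ||A w_k||^2,
   along one sample path ws = (w_k(omega))_k *)
Fixpoint iterate n d (A : 'M[R]_(n, d)) (b : 'cV[R]_n) (x0 : 'cV[R]_d)
    (ws : nat -> 'cV[R]_d) (k : nat) : 'cV[R]_d :=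
  match k with
  | 0 => x0
  | k'.+1 => let xk := iterate A b x0 ws k' in
      xk + (nrm2 (A *m ws k') ^+ 2)^-1 *:
             (ws k' *m (ws k')^T *m A^T *m (b - A *m xk))
  end.

Definition spans_block n d (A : 'M[R]_(n, d)) (ws : nat -> 'cV[R]_d)
    (C : set 'cV[R]_n) (a k : nat) : Prop :=
  span_set [set v | exists2 j, (a <= j <= k)%N & v = A *m ws j] = C.

Definition omin (Q : nat -> Prop) : option nat :=
  xget None [set o | match o with
                     | Some k => Q k /\ forall j, Q j -> (k <= j)%N
                     | None => forall k, ~ Q k end].

(* stopping times tau_l (None = infinity), along one sample path *)
Fixpoint tau n d (A : 'M[R]_(n, d)) (ws : nat -> 'cV[R]_d)
    (C : set 'cV[R]_n) (l : nat) : option nat :=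
  match l with
  | 0 => Some 0%N
  | l'.+1 =>
    match l' with
    | 0 => omin (fun k => spans_block A ws C 0 k)
    | _ => match tau A ws C l' with
           | Some m => omin (fun k => (m < k)%N /\ spans_block A ws C m.+1 k)
           | None => None
           end
    end
  end.

Definition block_start n d (A : 'M[R]_(n, d)) (ws : nat -> 'cV[R]_d)
    (C : set 'cV[R]_n) (l : nat) : option nat :=
  if l is 1%N then Some 0%N else omap S (tau A ws C l.-1).

Definition normalize n (v : 'cV[R]_n) : 'cV[R]_n := (nrm2 v)^-1 *: v.

Definition block_vecs n d (A : 'M[R]_(n, d)) (ws : nat -> 'cV[R]_d) (s e : nat)
  : set 'cV[R]_n :=
  [set u | exists2 j, (s <= j <= e)%N & u = normalize (A *m ws j)].

Definition max_indep_cols n m (F : 'M[R]_(n, m)) (S : set 'cV[R]_n) : Prop :=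
  (forall i, S (col i F)) /\ row_free F^T /\
  (forall v, S v -> (forall i, col i F != v) -> ~~ row_free (row_mx F v)^T).

Definition detset n (S : set 'cV[R]_n) : set R :=
  [set x | exists m (F : 'M[R]_(n, m)), max_indep_cols F S /\ x = \det (F^T *m F)].

Definition setmin (D : set R) : R := xget 0 [set x | D x /\ forall y, D y -> x <= y].

Definition gamma n d (A : 'M[R]_(n, d)) (ws : nat -> 'cV[R]_d)
    (C : set 'cV[R]_n) (l : nat) : R :=
  match block_start A ws C l, tau A ws C l with
  | Some s, Some e => 1 - setmin (detset (block_vecs A ws s e))
  | _, _ => 0
  end.

End Defs.

From HB Require Import structures.
From mathcomp Require Import all_boot all_order all_algebra.
From mathcomp Require Import all_classical all_reals all_analysis.
From mathcomp Require Import ring lra.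
Set Implicit Arguments. Unset Strict Implicit. Unset Printing Implicit Defensive.
Import Order.TTheory GRing.Theory Num.Theory.
Import numFieldNormedType.Exports.
Local Open Scope ring_scope.
Local Open Scope classical_set_scope.

(* The residual r_k = A x_k - b evolves by r_{k+1} = r_k - <u_k, r_k> u_k with
   u_k = A w_k / ||A w_k||, an orthogonal projection; every u_k lies in C(w)
   because it belongs to a block whose directions span C(w).  Split
   r_0 = e + c with e in E(w) and c in C(w).  The inner product <e, r_k> never
   changes, so r_k -> 0 forces e = 0.  Conversely, if e = 0 the residual stays in
   C(w), which is the span of the directions of each block, and Meany's inequality
   shrinks ||r||^2 over block l by 1 - det(F'F) <= gamma_l for a maximal
   independent family F of that block; since ||r_k|| is nonincreasing, r_k -> 0
   when the products of the gamma_l tend to 0. *)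

Section InnerProduct.
Variables (R : realType) (n : nat).
Implicit Types u v w : 'cV[R]_n.

Lemma dotvE u v : dotv u v = (u^T *m v) 0 0.
Proof. by rewrite /dotv mxE; apply: eq_bigr => i _; rewrite mxE. Qed.

Lemma dotvC u v : dotv u v = dotv v u.
Proof. by rewrite /dotv; apply: eq_bigr => i _; rewrite mulrC. Qed.

Lemma dotvDl u v w : dotv (u + v) w = dotv u w + dotv v w.
Proof. by rewrite /dotv -big_split; apply: eq_bigr => i _; rewrite mxE mulrDl. Qed.

Lemma dotvDr u v w : dotv w (u + v) = dotv w u + dotv w v.
Proof. by rewrite dotvC dotvDl !(dotvC w). Qed.

Lemma dotvZl a u v : dotv (a *: u) v = a * dotv u v.
Proof. by rewrite /dotv mulr_sumr; apply: eq_bigr => i _; rewrite mxE mulrA. Qed.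

Lemma dotvZr a u v : dotv v (a *: u) = a * dotv v u.
Proof. by rewrite dotvC dotvZl dotvC. Qed.

Lemma dotvBl u v w : dotv (u - v) w = dotv u w - dotv v w.
Proof. by rewrite dotvDl -scaleN1r dotvZl mulN1r. Qed.

Lemma dotvBr u v w : dotv w (u - v) = dotv w u - dotv w v.
Proof. by rewrite dotvC dotvBl !(dotvC w). Qed.

Lemma dotv0l v : dotv 0 v = 0.
Proof. by rewrite -(scale0r 0) dotvZl mul0r. Qed.

Lemma dotv0r v : dotv v 0 = 0.
Proof. by rewrite dotvC dotv0l. Qed.

Lemma dotv_ge0 v : 0 <= dotv v v.
Proof. by rewrite /dotv sumr_ge0 // => i _; rewrite -expr2 sqr_ge0. Qed.

Lemma dotv_eq0 v : dotv v v = 0 -> v = 0.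
Proof.
move=> v0; apply/matrixP => i j; rewrite ord1 mxE.
have sq_ge0 (k : 'I_n) : xpredT k -> 0 <= v k 0 * v k 0.
  by rewrite -expr2 sqr_ge0.
have /eqP := @psumr_eq0P _ _ xpredT (fun k => v k 0 * v k 0) sq_ge0 v0 i isT.
by rewrite mulf_eq0 orbb => /eqP.
Qed.

Lemma dotv_gt0 v : v != 0 -> 0 < dotv v v.
Proof. by move=> /eqP v0; rewrite lt_def dotv_ge0 andbT; apply/eqP => /dotv_eq0. Qed.

Lemma dotv_orthD u v : dotv u v = 0 ->
  dotv (u + v) (u + v) = dotv u u + dotv v v.
Proof. by move=> uv; rewrite !(dotvDl, dotvDr) (dotvC v u) uv addr0 add0r. Qed.

Lemma cauchy_schwarz_dotv u v : dotv u v ^+ 2 <= dotv u u * dotv v v.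
Proof.
have [->|/dotv_gt0 uu_gt0] := eqVneq u 0; first by rewrite !dotv0l expr0n mul0r.
have := dotv_ge0 (dotv u u *: v - dotv u v *: u).
rewrite !(dotvBl, dotvBr, dotvZl, dotvZr) (dotvC v u).
set a := dotv u u; set b := dotv u v; set c := dotv v v => ge0.
have : 0 <= a * (a * c - b ^+ 2) by move: ge0; congr (_ <= _); ring.
by rewrite pmulr_rge0 // subr_ge0 mulrC.
Qed.

Lemma nrm2_sqr v : nrm2 v ^+ 2 = dotv v v.
Proof. by rewrite /nrm2 sqr_sqrtr // dotv_ge0. Qed.

Lemma dotv_normalize v :
  v != 0 -> dotv (normalize v) (normalize v) = 1.
Proof.
move=> /dotv_gt0 /lt0r_neq0 vv_neq0.
by rewrite /normalize dotvZl dotvZr mulrA -expr2 exprVn nrm2_sqr mulVf.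
Qed.

Lemma normalizeK v : v != 0 -> nrm2 v *: normalize v = v.
Proof.
move=> /dotv_gt0 vv_gt0; rewrite /normalize scalerA mulfV ?scale1r //.
by rewrite /nrm2 sqrtr_eq0 -ltNge.
Qed.

Lemma normr_dotv_le u v : `|dotv u v| <= (\sum_i `|u i 0|) * `|v|.
Proof.
rewrite mulr_suml; apply: le_trans (ler_norm_sum _ _ _) _.
apply: ler_sum => i _; rewrite normrM ler_wpM2l // [leRHS]/Num.norm /= mx_normrE.
by apply/bigmax_geP; right; exists (i, 0).
Qed.

Lemma mx_norm_lt_dotv v (eps : R) : 0 < eps -> dotv v v < eps ^+ 2 -> `|v| < eps.
Proof.
move=> eps_gt0 v_lt; rewrite [ltLHS]/Num.norm /= mx_normrE.
apply/bigmax_ltP; split => // -[i j] _ /=; rewrite (ord1 j).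
rewrite -(ltr_pXn2r (_ : 0 < 2)%N) ?nnegrE ?normr_ge0 ?ltW //.
rewrite (real_normK (num_real (v i 0))).
apply: le_lt_trans v_lt; rewrite /dotv (bigD1 i) //= -expr2 lerDl.
by rewrite sumr_ge0 // => k _; rewrite -expr2 sqr_ge0.
Qed.

End InnerProduct.

Lemma dotv_mulmx (R : realType) n m (M : 'M[R]_(n, m)) (c : 'cV[R]_m) v :
  dotv (M *m c) v = dotv c (M^T *m v).
Proof. by rewrite !dotvE trmx_mul -mulmxA. Qed.

Lemma mulmx_cV11 (R : realType) n (v : 'cV[R]_n) (M : 'M[R]_1) : v *m M = M 0 0 *: v.
Proof. by apply/matrixP => i j; rewrite !mxE big_ord1 (ord1 j) mulrC. Qed.

Lemma row_free_trP (R : realType) n m (F : 'M[R]_(n, m)) :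
  reflect (forall c : 'cV[R]_m, F *m c = 0 -> c = 0) (row_free F^T).
Proof.
apply: (iffP idP) => [Ffree c Fc0 | Finj].
  have := mulmx_free_eq0 c^T Ffree.
  rewrite -trmx_mul Fc0 trmx0 eqxx => /esym/eqP/(congr1 trmx).
  by rewrite trmxK trmx0.
apply: inj_row_free => v Fv; apply: (can_inj trmxK); rewrite trmx0.
by apply: Finj; rewrite -(trmxK F) -trmx_mul Fv trmx0.
Qed.

Section Projection.
Variables (R : realType) (n : nat).
Implicit Types u v x y : 'cV[R]_n.

Definition perp_proj u v : 'cV[R]_n := v - dotv u v *: u.

Definition perp_projs (us : seq 'cV[R]_n) v := foldl (fun v u => perp_proj u v) v us.

Lemma perp_projD u x y : perp_proj u (x + y) = perp_proj u x + perp_proj u y.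
Proof. by rewrite /perp_proj dotvDr scalerDl opprD addrACA. Qed.

Lemma perp_projsD us x y : perp_projs us (x + y) = perp_projs us x + perp_projs us y.
Proof. by elim: us x y => //= u us IH x y; rewrite perp_projD IH. Qed.

Lemma perp_projs_id us y : {in us, forall u, dotv u y = 0} -> perp_projs us y = y.
Proof.
elim: us y => //= u us IH y uy.
rewrite /perp_proj uy ?mem_head // scale0r subr0 IH // => v vus.
by rewrite uy // in_cons vus orbT.
Qed.

Lemma dotv_perp_proj u x : dotv u u = 1 ->
  dotv (perp_proj u x) (perp_proj u x) = dotv x x - dotv u x ^+ 2.
Proof.
move=> uu; rewrite /perp_proj !(dotvBl, dotvBr, dotvZl, dotvZr) uu (dotvC x u).
by rewrite expr2; ring.
Qed.

Lemma perp_proj_orth u x : dotv u u = 1 -> dotv u (perp_proj u x) = 0.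
Proof. by move=> uu; rewrite /perp_proj dotvBr dotvZr uu mulr1 subrr. Qed.

Lemma perp_proj_le u x : dotv u u = 1 ->
  dotv (perp_proj u x) (perp_proj u x) <= dotv x x.
Proof. by move=> uu; rewrite dotv_perp_proj // lerBlDr lerDl sqr_ge0. Qed.

Lemma perp_projs_le us x : {in us, forall u, dotv u u = 1} ->
  dotv (perp_projs us x) (perp_projs us x) <= dotv x x.
Proof.
elim: us x => //= u us IH x uu.
apply: le_trans (perp_proj_le x (uu u (mem_head _ _))).
by apply: IH => v vus; rewrite uu // in_cons vus orbT.
Qed.

Section ColumnSpace.
Variables (m : nat) (F : 'M[R]_(n, m)).

Lemma colspace_perp_proj u x :
  colspace F u -> colspace F x -> colspace F (perp_proj u x).
Proof.
move=> [a ->] [c ->]; exists (c - dotv (F *m a) (F *m c) *: a).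
by rewrite /perp_proj mulmxBr scalemxAr.
Qed.

Lemma colspace_perp_projs us x : {in us, forall u, colspace F u} ->
  colspace F x -> colspace F (perp_projs us x).
Proof.
elim: us x => //= u us IH x Fus Fx; apply: IH.
  by move=> v vus; apply: Fus; rewrite in_cons vus orbT.
by apply: colspace_perp_proj => //; apply: Fus; rewrite mem_head.
Qed.

Lemma dotv_colspace_ker c y : F^T *m y = 0 -> dotv (F *m c) y = 0.
Proof. by move=> Fy; rewrite dotv_mulmx Fy dotv0r. Qed.

Lemma colspace_orth_decomp v : row_free F^T -> exists c, F^T *m (v - F *m c) = 0.
Proof.
move=> Ffree; have gram_unit : F^T *m F \in unitmx.
  rewrite -row_free_unit -[F^T *m F]trmxK; apply/row_free_trP => c.
  rewrite trmx_mul !trmxK => FFc0; apply: (row_free_trP _ Ffree); apply: dotv_eq0.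
  by rewrite dotv_mulmx mulmxA FFc0 dotv0r.
exists (invmx (F^T *m F) *m (F^T *m v)).
by rewrite mulmxBr !mulmxA mulmxV // mul1mx subrr.
Qed.

End ColumnSpace.
End Projection.

Lemma span_set_colspace (R : realType) n m (F : 'M[R]_(n, m)) (X : set 'cV[R]_n) :
  X `<=` colspace F -> span_set X `<=` colspace F.
Proof.
move=> XF v [k [c [z [Xz ->]]]].
have [cz Fcz] := choice (fun i => XF _ (Xz i)).
exists (\sum_i c i *: cz i); rewrite mulmx_sumr; apply: eq_bigr => i _.
by rewrite Fcz scalemxAr.
Qed.

Lemma is_subspace_perp_proj (R : realType) n (C : set 'cV[R]_n) u v :
  is_subspace C -> C u -> C v -> C (perp_proj u v).
Proof. by move=> [_ [CD CZ]] Cu Cv; rewrite /perp_proj -scaleNr; apply/CD/CZ. Qed.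

Lemma orth_compl_subspace (R : realType) n (X : set 'cV[R]_n) :
  is_subspace (orth_compl X).
Proof.
split; first by move=> z _; rewrite dotv0r.
split=> [u v Xu Xv z Xz | a u Xu z Xz]; first by rewrite dotvDr Xu // Xv // addr0.
by rewrite dotvZr Xu // mulr0.
Qed.

Lemma orth_projE (R : realType) n (E : set 'cV[R]_n) v e c : is_subspace E -> E e ->
  (forall e', E e' -> dotv e' c = 0) -> v = e + c -> orth_proj E v = e.
Proof.
move=> [E0 [ED EZ]] Ee Ec ->; apply: xget_unique.
  by split => // u Eu; rewrite addrAC subrr add0r Ec.
move=> p [Ep Ep_perp]; have Epe : E (p - e) by rewrite -scaleN1r; apply/ED/EZ.
apply/eqP; rewrite -subr_eq0; apply/eqP/dotv_eq0.
have := Ep_perp _ Epe; rewrite (_ : e + c - p = c - (p - e)); last first.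
  by rewrite opprB addrCA addrA.
by rewrite dotvBr Ec // sub0r => /eqP; rewrite oppr_eq0 => /eqP.
Qed.

Section Meany.
Variables (R : realType) (n : nat).
Implicit Types (u v x y : 'cV[R]_n) (us : seq 'cV[R]_n).

(* Meany's inequality for the successive projections along us, with F a
   maximal independent subfamily of us. *)
Definition meany_basis us m (F : 'M[R]_(n, m)) :=
  [/\ forall i, col i F \in us, row_free F^T, {in us, forall u, colspace F u},
      0 <= \det (F^T *m F) <= 1 &
      forall x, colspace F x ->
        dotv (perp_projs us x) (perp_projs us x) <= (1 - \det (F^T *m F)) * dotv x x].

Lemma meany_basis_nil : meany_basis [::] (0 : 'M[R]_(n, 0)).
Proof.
split=> //; first by case.
- by apply/row_free_trP => c _; apply/matrixP => -[].
- by rewrite det_mx00 ler01 lexx.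
- by move=> x [c ->]; rewrite mul0mx dotv0l mulr0.
Qed.

Lemma meany_basis_cons_colspace u us m (F : 'M[R]_(n, m)) :
  dotv u u = 1 -> colspace F u -> meany_basis us F -> meany_basis (u :: us) F.
Proof.
move=> uu Fu [Fcol Ffree Fus /andP[g_ge0 g_le1] Fcontr]; split => //.
- by move=> i; rewrite in_cons Fcol orbT.
- by move=> v; rewrite in_cons => /orP[/eqP-> // | /Fus].
- by rewrite g_ge0 g_le1.
move=> x Fx /=; apply: le_trans (Fcontr _ (colspace_perp_proj Fu Fx)) _.
by rewrite ler_wpM2l ?subr_ge0 ?perp_proj_le.
Qed.

Lemma colspace_row_mxP m (F : 'M[R]_(n, m)) u y :
  colspace (row_mx u F) y <-> exists a c, y = a *: u + F *m c.
Proof.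
split=> [[c ->] | [a [c ->]]].
  exists (usubmx c 0 0), (dsubmx c).
  by rewrite -{1}(vsubmxK c) mul_row_col mulmx_cV11.
by exists (col_mx a%:M c); rewrite mul_row_col mulmx_cV11 mxE mulr1n.
Qed.

Lemma row_free_row_mx m (F : 'M[R]_(n, m)) u :
  row_free F^T -> ~ colspace F u -> row_free (row_mx u F)^T.
Proof.
move=> /row_free_trP Finj Fu; apply/row_free_trP => c.
rewrite -(vsubmxK c) mul_row_col mulmx_cV11.
set a := usubmx c; set z := dsubmx c => uFc0.
have a0 : a 0 0 = 0.
  apply: contra_notP Fu => /eqP a_neq0; exists (- (a 0 0)^-1 *: z).
  apply: (scalerI a_neq0); rewrite -scalemxAr scalerA mulrN mulfV // scaleN1r.
  by apply/eqP; rewrite -subr_eq0 opprK uFc0.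
have -> : a = 0 by apply/matrixP => i j; rewrite !ord1 a0 mxE.
by move: uFc0; rewrite a0 scale0r add0r => /Finj ->; rewrite col_mx0.
Qed.

Lemma det_gram_row_mx m (F : 'M[R]_(n, m)) u c (q := u - F *m c) :
  F^T *m q = 0 -> \det ((row_mx u F)^T *m row_mx u F) = dotv q q * \det (F^T *m F).
Proof.
move=> Fq; pose L := block_mx (1%:M : 'M[R]_1) 0 c 1%:M.
have -> : row_mx u F = row_mx q F *m L.
  by rewrite mul_row_block !mulmx1 !mulmx0 add0r subrK.
rewrite trmx_mul -mulmxA (mulmxA (row_mx q F)^T) !det_mulmx det_tr.
rewrite det_lblock !det1 !mulr1 mul1r tr_row_mx mul_col_row Fq.
have -> : q^T *m F = 0 by rewrite -(trmxK F) -trmx_mul Fq trmx0.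
by rewrite det_lblock det_mx11 -dotvE.
Qed.

Lemma dotv_unit_orth_bound u q y : dotv u u = 1 -> dotv q u = dotv q q ->
  dotv u y = 0 -> dotv q y ^+ 2 <= dotv q q * (1 - dotv q q) * dotv y y.
Proof.
move=> uu qu uy; have := cauchy_schwarz_dotv (q - dotv q q *: u) y.
rewrite !(dotvBl, dotvBr, dotvZl, dotvZr) uy uu qu (dotvC u q) qu.
by congr (_ <= _); ring.
Qed.

(* Inductive step of Meany's inequality: with y orthogonal to u, the part of y
   orthogonal to the old column space is a multiple of q, and Cauchy-Schwarz
   bounds it by the factor 1 - |q|^2. *)
Lemma perp_projs_contract_row_mx us m (F : 'M[R]_(n, m)) u c (q := u - F *m c) g :
  dotv u u = 1 -> F^T *m q = 0 -> 0 < dotv q q -> 0 <= g ->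
  {in us, forall v, colspace F v} ->
  (forall x, colspace F x ->
     dotv (perp_projs us x) (perp_projs us x) <= (1 - g) * dotv x x) ->
  forall y, colspace (row_mx u F) y -> dotv u y = 0 ->
  dotv (perp_projs us y) (perp_projs us y) <= (1 - dotv q q * g) * dotv y y.
Proof.
move=> uu Fq s_gt0 g_ge0 Fus Fcontr y /colspace_row_mxP[a [z ->]] uy.
set s := dotv q q in s_gt0 *.
have q_orth w : colspace F w -> dotv w q = 0.
  by case=> cw ->; apply: dotv_colspace_ker.
have uE : a *: u + F *m z = a *: q + F *m (a *: c + z).
  by rewrite mulmxDr -scalemxAr addrA -scalerDr subrK.
have qu : dotv q u = s.
  have -> : u = q + F *m c by rewrite subrK.
  by rewrite dotvDr (dotvC q (F *m c)) (q_orth (F *m c)) ?addr0 //; exists c.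
move: uy; rewrite uE; set w := F *m (a *: c + z) => uy.
have Fw : colspace F w by exists (a *: c + z).
have Qw_in := colspace_perp_projs Fus Fw.
have normE x : colspace F x -> dotv (a *: q + x) (a *: q + x) = a ^+ 2 * s + dotv x x.
  move=> Fx; rewrite dotv_orthD; last by rewrite dotvZl dotvC (q_orth x) ?mulr0.
  by rewrite dotvZl dotvZr mulrA -expr2.
rewrite perp_projsD (perp_projs_id (y := a *: q)); last first.
  by move=> v /Fus Fv; rewrite dotvZr (q_orth v) ?mulr0.
rewrite !normE //.
have qy : dotv q (a *: q + w) = a * s.
  by rewrite dotvDr dotvZr (dotvC q w) (q_orth w) ?addr0.
have := dotv_unit_orth_bound uu qu uy; rewrite qy normE // -/s => bound.
have perp_le : a ^+ 2 * s ^+ 2 <= (1 - s) * dotv w w.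
  rewrite -(ler_pM2l s_gt0) -subr_ge0; move: bound; rewrite -subr_ge0.
  by congr (0 <= _); ring.
have := Fcontr _ Fw; have := dotv_ge0 w; nra.
Qed.

Lemma meany_basis_cons_row_mx u us m (F : 'M[R]_(n, m)) :
  dotv u u = 1 -> ~ colspace F u -> meany_basis us F ->
  meany_basis (u :: us) (row_mx u F).
Proof.
move=> uu Fu [Fcol Ffree Fus /andP[g_ge0 g_le1] Fcontr].
have [c Fq] := colspace_orth_decomp u Ffree; set q := u - F *m c in Fq.
have s_gt0 : 0 < dotv q q.
  apply: dotv_gt0; apply: contra_notN Fu => /eqP q0.
  by exists c; rewrite -(subrK (F *m c) u) -/q q0 add0r.
have s_le1 : dotv q q <= 1.
  have : dotv (F *m c + q) (F *m c + q) = 1 by rewrite addrC subrK.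
  by rewrite dotv_orthD ?(dotv_colspace_ker c Fq) // => <-; rewrite lerDr dotv_ge0.
have uF v : v \in u :: us -> colspace (row_mx u F) v.
  rewrite in_cons => /orP[/eqP-> | /Fus [cv ->]]; apply/colspace_row_mxP.
    by exists 1, 0; rewrite scale1r mulmx0 addr0.
  by exists 0, cv; rewrite scale0r add0r.
rewrite /meany_basis (det_gram_row_mx Fq); split => //.
- move=> i; rewrite -(fintype.splitK i); case: (fintype.split i) => j /=.
    rewrite colKl (_ : col j u = u) ?mem_head //.
    by apply/matrixP => k l; rewrite !mxE !ord1.
  by rewrite colKr in_cons Fcol orbT.
- exact: row_free_row_mx.
- by rewrite mulr_ge0 ?mulr_ile1 ?(ltW s_gt0).
move=> x Fx /=; have Fux : colspace (row_mx u F) (perp_proj u x).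
  by apply: colspace_perp_proj => //; apply: uF; rewrite mem_head.
apply: le_trans (perp_projs_contract_row_mx uu Fq s_gt0 g_ge0 Fus Fcontr Fux _) _.
  exact: perp_proj_orth.
by rewrite ler_wpM2l ?perp_proj_le // subr_ge0 mulr_ile1 ?(ltW s_gt0).
Qed.

Lemma meany us : {in us, forall u, dotv u u = 1} ->
  exists m (F : 'M[R]_(n, m)), meany_basis us F.
Proof.
elim: us => [_ | u us IH uus]; first by exists 0%N, 0; exact: meany_basis_nil.
have uu : dotv u u = 1 by rewrite uus ?mem_head.
have [|m [F FB]] := IH; first by move=> v vus; rewrite uus // in_cons vus orbT.
have [Fu | Fu] := pselect (colspace F u).
  by exists m, F; apply: meany_basis_cons_colspace.
by exists (1 + m)%N, (row_mx u F); apply: meany_basis_cons_row_mx.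
Qed.

Lemma meany_basis_max_indep us m (F : 'M[R]_(n, m)) :
  meany_basis us F -> max_indep_cols F [set u | u \in us].
Proof.
move=> [Fcol Ffree Fus _ _]; do 2!split => //; move=> v /Fus [c ->] _.
apply/negP => /row_free_trP /(_ (col_mx c (-1))).
rewrite mul_row_col mulmxN mulmx1 subrr => /(_ erefl) /(congr1 dsubmx).
by rewrite col_mxKd linear0 => /eqP; rewrite oppr_eq0 oner_eq0.
Qed.

End Meany.

Section Sequences.
Variable R : realType.

Lemma nonincreasing_subseq_cvg0 (a : R^nat) (s : nat -> nat) :
  {homo a : k m / (k <= m)%N >-> m <= k} -> (forall k, 0 <= a k) ->
  a \o s @ \oo --> (0 : R) -> a @ \oo --> (0 : R).
Proof.
move=> a_noninc a_ge0 /cvgrPdist_lt as_cvg0; apply/cvgrPdist_lt => eps eps_gt0.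
have [N _ aN_lt] := as_cvg0 eps eps_gt0.
exists (s N) => // k /= le_sN_k; rewrite sub0r normrN ger0_norm //.
have := aN_lt N (leqnn N); rewrite /= sub0r normrN ger0_norm //.
exact/le_lt_trans/a_noninc.
Qed.

Lemma dotv_cvg0 n (e : 'cV[R]_n) (v : nat -> 'cV[R]_n) :
  v @ \oo --> (0 : 'cV[R]_n) -> (fun k => dotv e (v k)) @ \oo --> (0 : R).
Proof.
move=> /cvg_norm; rewrite normr0 => v_cvg0.
set K := \sum_i `|e i 0|.
have Kv_cvg0 : (fun k => K * `|v k|) @ \oo --> (0 : R).
  by rewrite -(mulr0 K); apply: cvgM => //; exact: cvg_cst.
have mKv_cvg0 : (fun k => - (K * `|v k|)) @ \oo --> (0 : R).
  by rewrite -oppr0; exact: cvgN.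
apply: (squeeze_cvgr _ mKv_cvg0 Kv_cvg0).
by near=> k; rewrite -ler_norml normr_dotv_le.
Unshelve. all: end_near.
Qed.

Lemma cvg0_dotv n (v : nat -> 'cV[R]_n) :
  (fun k => dotv (v k) (v k)) @ \oo --> (0 : R) -> v @ \oo --> (0 : 'cV[R]_n).
Proof.
move=> /cvgrPdist_lt vv_cvg0; apply/cvgrPdist_lt => eps eps_gt0.
have [N _ vvN_lt] := vv_cvg0 _ (exprn_gt0 2 eps_gt0).
exists N => // k /= le_Nk; rewrite sub0r normrN mx_norm_lt_dotv //.
by have := vvN_lt k le_Nk; rewrite /= sub0r normrN ger0_norm ?dotv_ge0.
Qed.

End Sequences.

Lemma omin_spec (Q : nat -> Prop) k : omin Q = Some k -> Q k.
Proof.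
by rewrite /omin; case: xgetP => [x -> + xk | //]; rewrite xk => -[].
Qed.

(* setmin D is 0 when D has no least element, hence the sign condition. *)
Lemma setmin_le (R : realType) (D : set R) y : D y -> 0 <= y -> setmin D <= y.
Proof. by rewrite /setmin; case: xgetP => [x -> [_ Dmin] /Dmin | _]. Qed.

Section Iteration.
Variables (R : realType) (n d : nat) (A : 'M[R]_(n, d)) (b : 'cV[R]_n).
Variables (W : nat -> 'cV[R]_d) (x0 : 'cV[R]_d).

Definition residual k := A *m iterate A b x0 W k - b.
Definition direction k := normalize (A *m W k).

Lemma residualS k : residual k.+1 = perp_proj (direction k) (residual k).
Proof.
rewrite /residual /= /perp_proj /direction /normalize dotvZl scalerA.
set a := A *m W k; set xk := iterate A b x0 W k.
rewrite mulmxDr -scalemxAr.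
have -> : A *m (W k *m (W k)^T *m A^T *m (b - A *m xk)) = dotv a (b - A *m xk) *: a.
  by rewrite -!mulmxA mulmxA (mulmxA (W k)^T) -trmx_mul mulmx_cV11 -dotvE.
have -> : b - A *m xk = (-1) *: (A *m xk - b) by rewrite scaleN1r opprB.
rewrite dotvZr mulN1r scaleNr scalerN scalerA addrAC.
by rewrite [in RHS]mulrAC -expr2 exprVn.
Qed.

Lemma residualD s m :
  residual (s + m) = perp_projs [seq direction j | j <- iota s m] (residual s).
Proof.
elim: m => [|m IH]; first by rewrite addn0.
have -> : iota s m.+1 = iota s m ++ [:: (s + m)%N] by rewrite -addn1 iotaD.
by rewrite addnS residualS IH map_cat /perp_projs foldl_cat.
Qed.

Hypothesis AW_neq0 : forall k, A *m W k != 0.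

Lemma residual_nonincreasing :
  {homo (fun k => dotv (residual k) (residual k)) : k m / (k <= m)%N >-> m <= k}.
Proof.
move=> k m /subnK <-; elim: (m - k)%N => [|j IH] //=.
rewrite addSn residualS; apply: le_trans IH.
exact/perp_proj_le/dotv_normalize.
Qed.

End Iteration.

Section Blocks.
Variables (R : realType) (n d : nat) (A : 'M[R]_(n, d)) (W : nat -> 'cV[R]_d).
Variable C : set 'cV[R]_n.
Hypothesis tau_finite : forall l, tau A W C l <> None.

(* Block l consists of the indices tau_l + 1, ..., tau_{l+1} (0, ..., tau_1 for
   l = 0); its contraction factor is gamma_{l+1}. *)
Definition block_end l := odflt 0%N (tau A W C l.+1).
Definition block_first l := if l is l'.+1 then (block_end l').+1 else 0%N.

Lemma tau_block_end l : tau A W C l.+1 = Some (block_end l).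
Proof. by rewrite /block_end; case: (tau A W C l.+1) (@tau_finite l.+1). Qed.

Lemma block_endS l :
  (block_end l < block_end l.+1)%N /\
  spans_block A W C (block_end l).+1 (block_end l.+1).
Proof.
have : tau A W C l.+2 = if tau A W C l.+1 is Some m
    then omin (fun k => (m < k)%N /\ spans_block A W C m.+1 k) else None by [].
by rewrite !tau_block_end => /esym /omin_spec.
Qed.

Lemma block_spans l : spans_block A W C (block_first l) (block_end l).
Proof.
case: l => [|l]; last by case: (block_endS l).
by apply: omin_spec; rewrite -tau_block_end.
Qed.

Lemma block_first_le l : (block_first l <= block_end l)%N.
Proof. by case: l => [|l] //; case: (block_endS l). Qed.

Lemma in_some_block k : exists l, (block_first l <= k <= block_end l)%N.
Proof.
have le_k_end l : (l <= block_end l)%N.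
  by elim: l => // l IH; apply: leq_ltn_trans IH (proj1 (block_endS l)).
suff block_of l j : (j <= block_end l)%N ->
    exists l', (block_first l' <= j <= block_end l')%N.
  exact: block_of (le_k_end k).
elim: l j => [|l IH] j le_j_end; first by exists 0%N.
have [j_le|lt_j] := leqP j (block_end l); first exact: IH.
by exists l.+1; rewrite /= lt_j le_j_end.
Qed.

Lemma AW_in_C k : C (A *m W k).
Proof.
have [l /andP[first_le le_end]] := in_some_block k.
rewrite -(block_spans l); exists 1%N, (fun=> 1), (fun=> A *m W k); split.
  by exists k; rewrite ?first_le.
by rewrite big_ord1 scale1r.
Qed.

Lemma gammaE l :
  gamma A W C l.+1 = 1 - setmin (detset (block_vecs A W (block_first l) (block_end l))).
Proof.
case: l => [|l]; rewrite /gamma /block_start; first by rewrite tau_block_end.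
by rewrite [tau _ _ _ l.+2]tau_block_end [tau _ _ _ l.+1]tau_block_end.
Qed.

End Blocks.

Section Convergence.
Variables (R : realType) (n d : nat) (A : 'M[R]_(n, d)) (b : 'cV[R]_n).
Variables (W : nat -> 'cV[R]_d) (x0 : 'cV[R]_d) (C : set 'cV[R]_n).
Hypothesis AW_neq0 : forall k, A *m W k != 0.
Hypothesis tau_finite : forall l, tau A W C l <> None.

Local Notation r := (residual A b W x0).

Lemma block_contract l : C (r (block_first A W C l)) ->
  dotv (r (block_first A W C l.+1)) (r (block_first A W C l.+1)) <=
  `|gamma A W C l.+1| * dotv (r (block_first A W C l)) (r (block_first A W C l)).
Proof.
set s := block_first A W C l; set e := block_end A W C l => C_rs.
have le_s_e1 : (s <= e.+1)%N by rewrite leqW // block_first_le.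
set us := [seq direction A W j | j <- iota s (e.+1 - s)].
have usE : [set u | u \in us] = block_vecs A W s e.
  apply/seteqP; split => u.
    by move=> /mapP[j]; rewrite mem_iota subnKC // ltnS => ? ->; exists j.
  by move=> [j jse ->]; apply: map_f; rewrite mem_iota subnKC // ltnS.
have [|m [F FB]] := meany (us := us).
  by move=> u /mapP[j _ ->]; apply: dotv_normalize.
have [_ _ Fus /andP[det_ge0 _] Fcontr] := FB.
have Frs : colspace F (r s).
  move: C_rs; rewrite -(block_spans tau_finite l); apply: span_set_colspace.
  move=> _ [j jse ->]; have [|c Fc] := Fus (direction A W j).
    by apply: map_f; rewrite mem_iota subnKC // ltnS.
  by exists (nrm2 (A *m W j) *: c); rewrite -scalemxAr -Fc normalizeK.
rewrite /= -/e -(subnKC le_s_e1) residualD.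
apply: le_trans (Fcontr _ Frs) _; rewrite ler_wpM2r ?dotv_ge0 // gammaE //.
apply: le_trans (ler_norm _); rewrite lerD2l lerN2 setmin_le //.
by exists m, F; split; rewrite // -usE; exact: meany_basis_max_indep.
Qed.

Lemma dotv_residual_const e : (forall c, C c -> dotv e c = 0) ->
  forall k, dotv e (r k) = dotv e (r 0).
Proof.
move=> eC; elim=> // k <-.
by rewrite residualS dotvBr !dotvZr (eC _ (AW_in_C tau_finite k)) !mulr0 subr0.
Qed.

Lemma residual_cvg0_orth e : (forall c, C c -> dotv e c = 0) ->
  r @ \oo --> (0 : 'cV[R]_n) -> dotv e (r 0) = 0.
Proof.
move=> eC /(dotv_cvg0 e); under eq_fun do rewrite dotv_residual_const //.
by move=> /(cvg_lim (@Rhausdorff _)); rewrite lim_cst.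
Qed.

Hypothesis C_subspace : is_subspace C.

Lemma residual_cvg0 : C (r 0) ->
  (fun l => \prod_(1 <= j < l.+1) gamma A W C j) @ \oo --> (0 : R) ->
  r @ \oo --> (0 : 'cV[R]_n).
Proof.
move=> C_r0 /cvg_norm; rewrite normr0 => prod_cvg0.
have C_r k : C (r k).
  elim: k => // k IH; rewrite residualS; apply: is_subspace_perp_proj => //.
  by case: C_subspace => _ [_ CZ]; apply/CZ/(AW_in_C tau_finite).
have r_block L : dotv (r (block_first A W C L)) (r (block_first A W C L)) <=
    `|\prod_(1 <= j < L.+1) gamma A W C j| * dotv (r 0) (r 0).
  elim: L => [|L IH]; first by rewrite big_geq // normr1 mul1r.
  apply: le_trans (block_contract (C_r _)) _.
  by rewrite big_nat_recr //= normrM [_ * `|gamma _ _ _ _|]mulrC -mulrA ler_wpM2l.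
have bound_cvg0 : (fun L => `|\prod_(1 <= j < L.+1) gamma A W C j| * dotv (r 0) (r 0))
    @ \oo --> (0 : R).
  by rewrite -(mul0r (dotv (r 0) (r 0))); apply: cvgM => //; exact: cvg_cst.
apply/cvg0_dotv/(nonincreasing_subseq_cvg0 (s := block_first A W C)).
- exact: residual_nonincreasing.
- by move=> k; exact: dotv_ge0.
apply: (squeeze_cvgr _ (cvg_cst 0) bound_cvg0).
by near=> L; rewrite dotv_ge0 r_block.
Unshelve. all: end_near.
Qed.

End Convergence.

Theorem mainTheorem13 (R : realType) (dT : measure_display) (T : measurableType dT)
  (P : probability T R) (n d : nat) (A : 'M[R]_(n, d)) (b : 'cV[R]_n)
  (w : T -> 'cV[R]_d) (ws : nat -> T -> 'cV[R]_d) (x0 : 'cV[R]_d)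
  (E : set 'cV[R]_n) :
  (exists xs : 'cV[R]_d, A *m xs = b) ->
  (forall i, measurable_fun setT (fun t => w t i 0)) ->
  (forall l i, measurable_fun setT (fun t => ws l t i 0)) ->
  is_subspace E ->
  (forall e c, E e -> Cspace P A w c -> dotv e c = 0) ->
  (forall v, colspace A v <-> exists e c, E e /\ Cspace P A w c /\ v = e + c) ->
  (forall l, P [set t | Cspace P A w (A *m ws l t)] = 1%E) ->
  (forall k t, A *m ws k t != 0) ->
  forall t : T,
    (forall l, tau A (fun k => ws k t) (Cspace P A w) l <> None) ->
    (fun l => \prod_(1 <= j < l.+1) gamma A (fun k => ws k t) (Cspace P A w) j)
        @ \oo --> (0 : R) ->
    ((fun k => A *m iterate A b x0 (fun k => ws k t) k) @ \oo --> b
     <-> orth_proj E (A *m x0 - b) = 0).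
Proof.
move=> [xs Axs] _ _ E_subspace EC colE _ AW_neq0 t tau_finite prod_cvg0.
have [e [c [Ee [Cc r0E]]]] : exists e c, E e /\ Cspace P A w c /\ A *m x0 - b = e + c.
  by apply/colE; exists (x0 - xs); rewrite mulmxBr Axs.
rewrite (orth_projE E_subspace Ee _ r0E); last by move=> e' /EC; apply.
rewrite -subr_cvg0; split => [r_cvg0 | e0].
- apply: dotv_eq0.
  have := residual_cvg0_orth (b := b) (x0 := x0) tau_finite (EC e ^~ Ee) r_cvg0.
  by rewrite /residual /= r0E dotvDr (EC _ _ Ee Cc) addr0.
- have C_r0 : Cspace P A w (residual A b (ws^~ t) x0 0).
    by rewrite /residual /= r0E e0 add0r.
  exact: (residual_cvg0 (AW_neq0^~ t) tau_finite (orth_compl_subspace _) C_r0).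
Qed.
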